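(* Let $V_A, V_B \subseteq \mathbb{R}^d$ be $k$-dimensional subspaces, let $w\in\mathbb{R}^d$ with $\|w\|=1$, and set $K_A^* = \|\Pi_{V_A} w\|$, $K_B^* = \|\Pi_{V_B} w\|$, $K_{AB}^* = \|\Pi_{V_A+V_B} w\|$, and $\Delta = K_{AB}^* - \max(K_A^*,K_B^* )$. Assume $K_A^* \ge K_B^*$. Let $\eta = \eta(V_A,V_B,w)$ be the private information value of $V_B$ relative to $V_A$. Then $$\Delta = \sqrt{(K_A^* )^2 + \eta^2} - K_A^*,$$ and $$\frac{\eta^2}{2K_A^* + \eta} \le \Delta \le \eta.$$ Both bounds are tight: the upper bound holds with equality when $K_A^* = 0$, and the lower bound is asymptotically tight as $\eta \to 0$ (with $K_A^*>0$ fixed), in the sense that $\Delta$ and $\eta^2/(2K_A^*+\eta)$ both equal $\eta^2/(2K_A^* )$ up to $o(\eta^2)$.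
   Context: $\Pi_V$ denotes orthogonal projection onto a subspace $V$; $V_A+V_B=\{u+v: u\in V_A, v\in V_B\}$. Principal angles $\theta_1,\dots,\theta_k\in[0,\pi/2]$ between $V_A$ and $V_B$ are defined recursively by $\cos\theta_i = \max\{\langle u,v\rangle : u\in V_A,\|u\|=1,u\perp u_1,\dots,u_{i-1};\ v\in V_B,\|v\|=1,v\perp v_1,\dots,v_{i-1}\}$, with maximizers $(u_i,v_i)$ (principal vectors) satisfying $\langle u_i,v_j\rangle=\cos\theta_i\,\delta_{ij}$. For $\theta_i>0$ set $\tilde v_i=(v_i-\cos\theta_i\,u_i)/\sin\theta_i$. The private information value is $\eta(V_A,V_B,w)=\sqrt{\sum_{i:\theta_i>0}\langle w,\tilde v_i\rangle^2}$. (Interpretation: $K(y)=\langle w,h(y)\rangle$ is a linear scoring function on representations, $K_A^*, K_B^*$ are the single-model optimal scores, $K_{AB}^*$ the debate-optimal score, and $\Delta$ the debate advantage.) *)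

From HB Require Import structures.
From mathcomp Require Import all_boot all_order all_algebra.
From mathcomp Require Import all_classical all_reals all_analysis.
Set Implicit Arguments. Unset Strict Implicit. Unset Printing Implicit Defensive.
Import Order.TTheory GRing.Theory Num.Theory.
Local Open Scope ring_scope.
Local Open Scope classical_set_scope.

(* Vectors of R^d are row vectors 'rV[R]_d; a subspace of R^d is the row
   space of a square matrix V : 'M[R]_d; membership is (u <= V)%MS;
   the sum V_A + V_B is (VA + VB)%MS; dim V = \rank V. *)

Section Defs.
Variables (R : realType) (d : nat).

Definition dotv (u v : 'rV[R]_d) : R := (u *m v^T) 0 0.
Definition normv (u : 'rV[R]_d) : R := Num.sqrt (dotv u u).

Definition is_orth_proj (V : 'M[R]_d) (w p : 'rV[R]_d) : Prop :=
  (p <= V)%MS /\ (forall x : 'rV[R]_d, (x <= V)%MS -> dotv (w - p) x = 0).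

Definition orth_proj (V : 'M[R]_d) (w : 'rV[R]_d) : 'rV[R]_d :=
  xget 0 [set p | is_orth_proj V w p].

(* (u, v) : 'I_k -> R^d is a system of principal vectors between V_A and V_B
   following the recursive definition: for each i, (u i, v i) is a maximizer of
   <x, y> over unit x in V_A orthogonal to u_0..u_{i-1} and unit y in V_B
   orthogonal to v_0..v_{i-1}. *)
Definition feasible_pair (VA VB : 'M[R]_d) (k : nat) (u v : 'I_k -> 'rV[R]_d)
    (i : 'I_k) (x y : 'rV[R]_d) : Prop :=
  [/\ (x <= VA)%MS, normv x = 1 & (forall j : 'I_k, (j < i)%N -> dotv x (u j) = 0)] /\
  [/\ (y <= VB)%MS, normv y = 1 & (forall j : 'I_k, (j < i)%N -> dotv y (v j) = 0)].

Definition principal_vectors (VA VB : 'M[R]_d) (k : nat)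
    (u v : 'I_k -> 'rV[R]_d) : Prop :=
  forall i : 'I_k, feasible_pair VA VB u v i (u i) (v i) /\
    (forall x y, feasible_pair VA VB u v i x y -> dotv x y <= dotv (u i) (v i)).

Definition principal_angle (k : nat) (u v : 'I_k -> 'rV[R]_d) (i : 'I_k) : R :=
  acos (dotv (u i) (v i)).

Definition vtilde (k : nat) (u v : 'I_k -> 'rV[R]_d) (i : 'I_k) : 'rV[R]_d :=
  let th := principal_angle u v i in
  (sin th)^-1 *: (v i - cos th *: u i).

Definition private_info (k : nat) (u v : 'I_k -> 'rV[R]_d) (w : 'rV[R]_d) : R :=
  Num.sqrt (\sum_(i < k | 0 < principal_angle u v i) (dotv w (vtilde u v i)) ^+ 2).

End Defs.

From HB Require Import structures.
From mathcomp Require Import all_boot all_order all_algebra.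
From mathcomp Require Import all_classical all_reals all_analysis.
From mathcomp Require Import ring lra.
Import Order.TTheory GRing.Theory Num.Theory numFieldNormedType.Exports.
Local Open Scope ring_scope.
Local Open Scope classical_set_scope.
Set Implicit Arguments. Unset Strict Implicit. Unset Printing Implicit Defensive.

(* The u_i, together with the vtilde_i for theta_i > 0, form an orthonormal
   basis of V_A + V_B extending the orthonormal basis (u_i) of V_A.
   Orthonormality comes from the first-order conditions of the recursive
   maximization: rotating one vector of a maximizing pair within a plane of
   feasible unit vectors cannot increase <u_i, v_i>, which forces the cross
   inner products <u_i, v_j> (i <> j) to vanish.  Spanning comes from
   rank V_A = rank V_B = k.  Expanding w in this basis gives
   (K_AB)^2 = (K_A)^2 + eta^2, hence Delta = sqrt (K_A^2 + eta^2) - K_A, and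
   the bounds and expansions are elementary real analysis. *)

Section InnerProduct.
Variables (R : realType) (d : nat).
Implicit Types (x y z : 'rV[R]_d).

Lemma dotvE x y : dotv x y = \sum_j x 0 j * y 0 j.
Proof. by rewrite /dotv !mxE; apply: eq_bigr => j _; rewrite mxE. Qed.

Lemma dotvC x y : dotv x y = dotv y x.
Proof. by rewrite !dotvE; apply: eq_bigr => j _; rewrite mulrC. Qed.

Lemma dotvDl z x y : dotv (x + y) z = dotv x z + dotv y z.
Proof. by rewrite /dotv mulmxDl mxE. Qed.

Lemma dotvZl z a x : dotv (a *: x) z = a * dotv x z.
Proof. by rewrite /dotv -scalemxAl mxE. Qed.

Lemma dotv0l z : dotv 0 z = 0.
Proof. by rewrite /dotv mul0mx mxE. Qed.

Lemma dotvNl z x : dotv (- x) z = - dotv x z.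
Proof. by rewrite -scaleN1r dotvZl mulN1r. Qed.

Lemma dotvBl z x y : dotv (x - y) z = dotv x z - dotv y z.
Proof. by rewrite dotvDl dotvNl. Qed.

Lemma dotvDr z x y : dotv z (x + y) = dotv z x + dotv z y.
Proof. by rewrite dotvC dotvDl !(dotvC z). Qed.

Lemma dotvZr z a x : dotv z (a *: x) = a * dotv z x.
Proof. by rewrite dotvC dotvZl dotvC. Qed.

Lemma dotvNr z x : dotv z (- x) = - dotv z x.
Proof. by rewrite dotvC dotvNl dotvC. Qed.

Lemma dotvBr z x y : dotv z (x - y) = dotv z x - dotv z y.
Proof. by rewrite dotvDr dotvNr. Qed.

Lemma dotv_suml (I : Type) (r : seq I) (P : pred I) (F : I -> 'rV[R]_d) z :
  dotv (\sum_(i <- r | P i) F i) z = \sum_(i <- r | P i) dotv (F i) z.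
Proof. exact: (big_morph (fun x => dotv x z) (dotvDl z) (dotv0l z)). Qed.

Lemma dotv_sumr (I : Type) (r : seq I) (P : pred I) (F : I -> 'rV[R]_d) z :
  dotv z (\sum_(i <- r | P i) F i) = \sum_(i <- r | P i) dotv z (F i).
Proof. by rewrite dotvC dotv_suml; apply: eq_bigr => i _; rewrite dotvC. Qed.

Lemma dotvv_ge0 x : 0 <= dotv x x.
Proof. by rewrite dotvE sumr_ge0 // => j _; rewrite -expr2 sqr_ge0. Qed.

Lemma dotvv_eq0 x : dotv x x = 0 -> x = 0.
Proof.
rewrite dotvE => x0; apply/matrixP => i j; rewrite ord1 mxE.
have sq_ge0 l : true -> 0 <= x 0 l * x 0 l by rewrite -expr2 sqr_ge0.
by apply/eqP; rewrite -sqrf_eq0 expr2 (psumr_eq0P sq_ge0 x0).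
Qed.

Lemma normv_eq1 x : normv x = 1 <-> dotv x x = 1.
Proof.
rewrite /normv; split => [x1|->]; last exact: sqrtr1.
by rewrite -(sqr_sqrtr (dotvv_ge0 x)) x1 expr1n.
Qed.

Lemma dotv_addsmx_eq0 m1 m2 (A : 'M[R]_(m1, d)) (B : 'M[R]_(m2, d)) z x :
  (forall y, (y <= A)%MS -> dotv z y = 0) ->
  (forall y, (y <= B)%MS -> dotv z y = 0) ->
  (x <= A + B)%MS -> dotv z x = 0.
Proof.
move=> zA zB /sub_addsmxP [[a b] ->] /=.
by rewrite dotvDr zA ?zB ?add0r // submxMl.
Qed.

Lemma is_orth_proj_uniq (V : 'M[R]_d) w p q :
  is_orth_proj V w p -> is_orth_proj V w q -> p = q.
Proof.
move=> [pV wp] [qV wq]; apply/eqP; rewrite -subr_eq0; apply/eqP/dotvv_eq0.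
have pqV : (p - q <= V)%MS by rewrite addmx_sub // -scaleN1r scalemx_sub.
have E : p - q = (w - q) - (w - p) by rewrite opprB [RHS]addrC [RHS]addrA subrK.
by rewrite {1}E dotvBl wp // wq // subrr.
Qed.

Lemma orth_projE (V : 'M[R]_d) w p : is_orth_proj V w p -> orth_proj V w = p.
Proof.
move=> wp; apply: xget_unique => // q wq.
exact: is_orth_proj_uniq wq wp.
Qed.

Lemma dotv_orth_proj (V : 'M[R]_d) w p : is_orth_proj V w p -> dotv p p = dotv w p.
Proof.
by move=> [pV wp]; apply/eqP; rewrite eq_sym -subr_eq0 -dotvBl wp.
Qed.

End InnerProduct.

Section Orthonormal.
Variables (R : realType) (d : nat) (I : finType) (P : pred I) (f : I -> 'rV[R]_d).

Definition orthonormal_on :=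
  forall i j, P i -> P j -> dotv (f i) (f j) = (i == j)%:R.

Definition fourier_sum (w : 'rV[R]_d) := \sum_(i | P i) dotv w (f i) *: f i.

Lemma fourier_sum_orth w j : orthonormal_on -> P j ->
  dotv (w - fourier_sum w) (f j) = 0.
Proof.
move=> fP Pj; rewrite dotvBl dotv_suml (bigD1 j) //= dotvZl fP // eqxx mulr1.
rewrite big1 ?addr0 ?subrr // => i /andP [Pi /negbTE nij].
by rewrite dotvZl fP // nij mulr0.
Qed.

Lemma fourier_sum_orth_proj (V : 'M[R]_d) w : orthonormal_on ->
  (forall i, P i -> (f i <= V)%MS) ->
  (forall z x, (forall i, P i -> dotv z (f i) = 0) -> (x <= V)%MS -> dotv z x = 0) ->
  is_orth_proj V w (fourier_sum w).
Proof.
move=> fP fV Vspan; split; first by apply: summx_sub => i Pi; rewrite scalemx_sub ?fV.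
by move=> x; apply: Vspan => i; apply: fourier_sum_orth.
Qed.

Lemma normv_orth_proj_fourier (V : 'M[R]_d) w :
  is_orth_proj V w (fourier_sum w) ->
  normv (orth_proj V w) = Num.sqrt (\sum_(i | P i) dotv w (f i) ^+ 2).
Proof.
move=> wp; rewrite (orth_projE wp) /normv (dotv_orth_proj wp) dotv_sumr.
by congr Num.sqrt; apply: eq_bigr => i _; rewrite dotvZr expr2.
Qed.

End Orthonormal.

Lemma orthonormal_rank_span (R : realType) (d k : nat) (V : 'M[R]_d)
    (f : 'I_k -> 'rV[R]_d) z x :
  orthonormal_on predT f -> (forall i, (f i <= V)%MS) -> \rank V = k ->
  (forall i, dotv z (f i) = 0) -> (x <= V)%MS -> dotv z x = 0.
Proof.
move=> fP fV rV zf xV; set F := \matrix_i f i.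
have FF : F *m F^T = 1%:M.
  apply/matrixP => i j; rewrite !mxE -fP // dotvE.
  by apply: eq_bigr => l _; rewrite !mxE.
have rF : \rank F = k.
  by apply/anti_leq; rewrite rank_leq_row /= -{1}(mxrank1 R k) -FF mxrankM_maxl.
have FV : (F <= V)%MS by apply/row_subP => i; rewrite rowK.
have /submxP [a ->] : (x <= F)%MS.
  by apply: submx_trans xV _; rewrite -(mxrank_leqif_sup FV).2 rF rV.
have zF : z *m F^T = 0.
  apply/matrixP => i j; rewrite ord1 [RHS]mxE -(zf j) dotvE !mxE.
  by apply: eq_bigr => l _; rewrite !mxE.
by rewrite /dotv trmx_mul mulmxA zF mul0mx mxE.
Qed.

Lemma linear_le_quadratic_eq0 (R : realFieldType) (a c : R) :
  (forall t, t * a <= c * t ^+ 2) -> a = 0.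
Proof.
set s := `|c| + 1; have s_gt0 : 0 < s by rewrite ltr_pwDr.
have cs : c < s by rewrite /s ltr_pwDr // ler_norm.
move=> /(_ (a / s)); set t := a / s.
have -> : a = t * s by rewrite /t divfK ?gt_eqF.
move=> ts; have t2 : t ^+ 2 <= 0 by nra.
by apply/eqP; rewrite mulf_eq0 -sqrf_eq0 eq_le t2 sqr_ge0.
Qed.

Section Rotation.
Variables (R : realType) (d : nat).
Implicit Types (x e y : 'rV[R]_d) (t : R).

(* ((1 - t^2) / (1 + t^2), 2t / (1 + t^2)) is the rational parametrization of
   the unit circle. *)
Definition rotv t x e := (1 + t ^+ 2)^-1 *: ((1 - t ^+ 2) *: x + (2 * t) *: e).

Lemma dotv_rotv t x e y :
  dotv (rotv t x e) y = (1 + t ^+ 2)^-1 * ((1 - t ^+ 2) * dotv x y + 2 * t * dotv e y).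
Proof. by rewrite /rotv dotvZl dotvDl !dotvZl. Qed.

Lemma rotv_sub t x e (V : 'M[R]_d) :
  (x <= V)%MS -> (e <= V)%MS -> (rotv t x e <= V)%MS.
Proof. by move=> xV eV; rewrite scalemx_sub // addmx_sub // scalemx_sub. Qed.

Lemma normv_rotv t x e : dotv x x = 1 -> dotv e e = 1 -> dotv x e = 0 ->
  normv (rotv t x e) = 1.
Proof.
move=> x1 e1 xe; apply/normv_eq1.
rewrite dotv_rotv ![dotv _ (rotv _ _ _)]dotvC !dotv_rotv x1 e1 xe dotvC xe.
have : 1 + t ^+ 2 != 0 by rewrite gt_eqF // ltr_pwDl // sqr_ge0.
by move=> ?; field.
Qed.

Lemma rotv_max_orth x e y : dotv x x = 1 -> dotv e e = 1 -> dotv x e = 0 ->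
  (forall t, dotv (rotv t x e) y <= dotv x y) -> dotv e y = 0.
Proof.
move=> x1 e1 xe xy_max; apply: (@linear_le_quadratic_eq0 _ _ (dotv x y)) => t.
have t2_gt0 : 0 < 1 + t ^+ 2 by rewrite ltr_pwDl // sqr_ge0.
have := xy_max t; rewrite dotv_rotv mulrC -ler_pdivlMr ?invr_gt0 // invrK.
nra.
Qed.

End Rotation.

Section PrincipalVectorsSide.
Variables (R : realType) (d k : nat) (VA VB : 'M[R]_d) (u v : 'I_k -> 'rV[R]_d).

Lemma principal_vectorsC :
  principal_vectors VA VB u v -> principal_vectors VB VA v u.
Proof.
move=> pv i; have [[uA vB] uv_max] := pv i; split; first by split.
by move=> x y [yB xA]; rewrite dotvC [X in _ <= X]dotvC; apply: uv_max.
Qed.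

Hypothesis pv : principal_vectors VA VB u v.

Lemma pv_subA i : (u i <= VA)%MS.
Proof. by have [[[]]] := pv i. Qed.

Lemma pv_orthonormal_u : orthonormal_on predT u.
Proof.
have orth_lt (i j : 'I_k) : (i < j)%N -> dotv (u j) (u i) = 0.
  by have [[[_ _ uj_orth] _] _] := pv j; apply: uj_orth.
move=> i j _ _; case: (ltngtP i j) => [ij|ji|/val_inj ->].
- by rewrite dotvC orth_lt // lt_eqF.
- by rewrite orth_lt // gt_eqF.
- by have [[[_ /normv_eq1 -> _] _] _] := pv j; rewrite eqxx.
Qed.

Lemma pv_cos_ge0 i : 0 <= dotv (u i) (v i).
Proof.
have [[uA [vB /normv_eq1 v1 vi_orth]] uv_max] := pv i.
have : dotv (u i) (- v i) <= dotv (u i) (v i).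
  apply: uv_max; split=> //; split.
  - by rewrite -scaleN1r scalemx_sub.
  - by apply/normv_eq1; rewrite dotvNl dotvNr opprK.
  - by move=> j ji; rewrite dotvNl vi_orth ?oppr0.
rewrite dotvNr; lra.
Qed.

(* Rotating [u j] towards [u i] keeps the pair feasible at step [j], so
   the first-order condition at the maximizer gives the orthogonality. *)
Lemma pv_cross_orth_lt (i j : 'I_k) : (j < i)%N -> dotv (u i) (v j) = 0.
Proof.
move=> ji; have [[[ujA _ uj_orth] vj_feas] uv_max] := pv j.
have uu := pv_orthonormal_u.
apply: (rotv_max_orth (x := u j)); rewrite ?uu ?eqxx ?lt_eqF // => t.
apply: uv_max; split=> //; split.
- exact: rotv_sub (pv_subA i).
- by apply: normv_rotv; rewrite uu ?eqxx ?lt_eqF.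
- move=> l lj; rewrite dotv_rotv !uu ?gt_eqF //; last exact: ltn_trans ji.
  by rewrite !mulr0 addr0 mulr0.
Qed.

End PrincipalVectorsSide.

Section PrincipalVectors.
Variables (R : realType) (d k : nat) (VA VB : 'M[R]_d) (u v : 'I_k -> 'rV[R]_d).
Hypothesis pv : principal_vectors VA VB u v.

Lemma pv_subB i : (v i <= VB)%MS.
Proof. exact: pv_subA (principal_vectorsC pv) i. Qed.

Lemma pv_orthonormal_v : orthonormal_on predT v.
Proof. exact: pv_orthonormal_u (principal_vectorsC pv). Qed.

Lemma pv_cos_le1 i : dotv (u i) (v i) <= 1.
Proof.
have := dotvv_ge0 (u i - v i).
rewrite !dotvBl !dotvBr (pv_orthonormal_u pv) ?pv_orthonormal_v // (dotvC (v i)) eqxx /=.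
lra.
Qed.

Lemma pv_cross_orth i j : i != j -> dotv (u i) (v j) = 0.
Proof.
case: (ltngtP i j) => [ij|ji|/val_inj -> /eqP //] _.
- by rewrite dotvC (pv_cross_orth_lt (principal_vectorsC pv)).
- exact: pv_cross_orth_lt.
Qed.

End PrincipalVectors.

Section PrivateInformation.
Variables (R : realType) (d k : nat) (VA VB : 'M[R]_d) (u v : 'I_k -> 'rV[R]_d).
Hypothesis pv : principal_vectors VA VB u v.

Local Notation c i := (dotv (u i) (v i)).
Local Notation s i := (Num.sqrt (1 - c i ^+ 2)).
Local Notation vt := (vtilde u v).
Local Notation P := (fun i => 0 < principal_angle u v i).

Lemma pv_cos_range i : -1 <= c i <= 1.
Proof. by rewrite (pv_cos_le1 pv) andbT (le_trans _ (pv_cos_ge0 pv i)) ?lerN10. Qed.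

Lemma principal_angle_gt0 i : (0 < principal_angle u v i) = (c i < 1).
Proof.
rewrite /principal_angle; have := pv_cos_le1 pv i.
rewrite le_eqVlt => /orP [/eqP ->|c_lt1]; first by rewrite acos1 !ltxx.
by rewrite c_lt1 acos_gt0 // c_lt1 andbT (le_trans _ (pv_cos_ge0 pv i)) ?lerN10.
Qed.

Lemma sin_principal_angle_gt0 i : c i < 1 -> 0 < s i.
Proof. by move=> c_lt1; rewrite sqrtr_gt0 subr_gt0; have := pv_cos_ge0 pv i; nra. Qed.

Lemma vtildeE i : vt i = (s i)^-1 *: (v i - c i *: u i).
Proof.
by rewrite /vtilde /principal_angle sin_acos ?(acos_def (pv_cos_range i)).2 ?pv_cos_range.
Qed.

Lemma v_vtildeE i : c i < 1 -> v i = s i *: vt i + c i *: u i.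
Proof.
move=> c_lt1; rewrite vtildeE scalerA mulfV ?gt_eqF ?sin_principal_angle_gt0 //.
by rewrite scale1r subrK.
Qed.

Lemma v_eq_u i : ~~ (c i < 1) -> v i = u i.
Proof.
move=> c_ge1; have c1 : c i = 1 by apply/le_anti; rewrite (pv_cos_le1 pv) leNgt.
apply/eqP; rewrite -subr_eq0; apply/eqP/dotvv_eq0.
rewrite !dotvBl !dotvBr (pv_orthonormal_u pv) ?(pv_orthonormal_v pv) //.
by rewrite (dotvC (v i)) c1 eqxx /= !subrr.
Qed.

Lemma dotv_u_vtilde i j : c j < 1 -> dotv (u i) (vt j) = 0.
Proof.
move=> c_lt1; rewrite vtildeE dotvZr dotvBr dotvZr (pv_orthonormal_u pv) //.
have [->|ij] := eqVneq i j; first by rewrite mulr1 subrr mulr0.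
by rewrite (pv_cross_orth pv ij) mulr0 subrr mulr0.
Qed.

Lemma vtilde_orthonormal : orthonormal_on P vt.
Proof.
move=> i j; rewrite !principal_angle_gt0 => ci_lt1 cj_lt1.
rewrite !vtildeE dotvZl dotvZr dotvBl !dotvBr !dotvZl !dotvZr.
rewrite !(pv_orthonormal_u pv) ?(pv_orthonormal_v pv) // [dotv (v i) _]dotvC.
have [<-|ij] := eqVneq i j; last first.
  rewrite (pv_cross_orth pv ij) (pv_cross_orth pv (i := j) (j := i)) 1?eq_sym //.
  by rewrite !mulr0 !subrr !mulr0.
have s2 : s i ^+ 2 = 1 - c i ^+ 2.
  by rewrite sqr_sqrtr // subr_ge0; have /andP [] := pv_cos_range i; nra.
have si_neq0 : s i != 0 by rewrite gt_eqF ?sin_principal_angle_gt0.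
have -> : true%:R - c i * c i - (c i * c i - c i * (c i * true%:R)) = s i ^+ 2.
  by rewrite s2 /=; ring.
by rewrite mulrA -expr2 exprVn mulVf // expf_neq0.
Qed.

Lemma vtilde_sub i : (vt i <= VA + VB)%MS.
Proof.
have uAB := submx_trans (pv_subA pv i) (addsmxSl VA VB).
have vAB := submx_trans (pv_subB pv i) (addsmxSr VA VB).
by rewrite vtildeE scalemx_sub // addmx_sub // -scaleN1r !scalemx_sub.
Qed.

Lemma dotv_v_eq0 z j : (forall i, dotv z (u i) = 0) ->
  (forall i, P i -> dotv z (vt i) = 0) -> dotv z (v j) = 0.
Proof.
move=> zu zvt; have [cj_lt1|cj_ge1] := boolP (c j < 1); last by rewrite v_eq_u.
by rewrite v_vtildeE // dotvDr (dotvZr z (s j)) (dotvZr z (c j)) zu zvt ?principal_angle_gt0 // !mulr0 addr0.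
Qed.

Definition basisAB (x : 'I_k + 'I_k) : 'rV[R]_d :=
  match x with inl i => u i | inr i => vt i end.

Definition basisAB_on : pred ('I_k + 'I_k) :=
  fun x => if x is inr i then P i else true.

Lemma basisAB_orthonormal : orthonormal_on basisAB_on basisAB.
Proof.
case=> i [] j //= Pi Pj; rewrite ?(pv_orthonormal_u pv) ?vtilde_orthonormal //.
- by rewrite dotv_u_vtilde // -principal_angle_gt0.
- by rewrite dotvC dotv_u_vtilde // -principal_angle_gt0.
Qed.

Hypotheses (rA : \rank VA = k) (rB : \rank VB = k).

Lemma orth_proj_fourier_u w : is_orth_proj VA w (fourier_sum predT u w).
Proof.
apply: fourier_sum_orth_proj (pv_orthonormal_u pv) _ _ => [i _|z x zu].
  exact: pv_subA.
exact: orthonormal_rank_span (pv_orthonormal_u pv) (pv_subA pv) rA (fun i => zu i isT).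
Qed.

Lemma orth_proj_fourier_basisAB w :
  is_orth_proj (VA + VB)%MS w (fourier_sum basisAB_on basisAB w).
Proof.
apply: fourier_sum_orth_proj basisAB_orthonormal _ _.
  by case=> i _ /=; [exact: submx_trans (pv_subA pv i) (addsmxSl _ _) | exact: vtilde_sub].
move=> z x zb; have zu i : dotv z (u i) = 0 := zb (inl i) isT.
apply: dotv_addsmx_eq0 => y.
  exact: orthonormal_rank_span (pv_orthonormal_u pv) (pv_subA pv) rA zu.
apply: orthonormal_rank_span (pv_orthonormal_v pv) (pv_subB pv) rB _ => j.
by apply: dotv_v_eq0 => // i; apply: (zb (inr i)).
Qed.

Lemma normv_orth_proj_addsmx w :
  normv (orth_proj (VA + VB)%MS w) =
  Num.sqrt (normv (orth_proj VA w) ^+ 2 + private_info u v w ^+ 2).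
Proof.
rewrite (normv_orth_proj_fourier (orth_proj_fourier_basisAB w)).
rewrite (normv_orth_proj_fourier (orth_proj_fourier_u w)) big_sumType /=.
by rewrite /private_info !sqr_sqrtr // sumr_ge0 // => i _; rewrite sqr_ge0.
Qed.

End PrivateInformation.

Lemma sq_root_sub_bounds (R : realFieldType) (a e S : R) :
  0 <= a -> 0 <= e -> 0 <= S -> S ^+ 2 = a ^+ 2 + e ^+ 2 ->
  e ^+ 2 / (2 * a + e) <= S - a <= e.
Proof.
move=> a_ge0 e_ge0 S_ge0 S_sq.
have aS : a <= S by nra.
have Sae : S <= a + e by nra.
apply/andP; split; last by rewrite lerBlDl.
have [ae0|ae_neq0] := eqVneq (2 * a + e) 0; first by rewrite ae0 invr0 mulr0 subr_ge0.
rewrite ler_pdivrMr; last by rewrite lt_neqAle eq_sym ae_neq0 addr_ge0 ?mulr_ge0.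
nra.
Qed.

Lemma sqrt_sqD_sub_bounds (R : rcfType) (a e : R) : 0 <= a -> 0 <= e ->
  e ^+ 2 / (2 * a + e) <= Num.sqrt (a ^+ 2 + e ^+ 2) - a <= e.
Proof.
move=> a_ge0 e_ge0; apply: sq_root_sub_bounds; rewrite ?sqrtr_ge0 //.
by rewrite sqr_sqrtr // addr_ge0 // sqr_ge0.
Qed.

Lemma cvg_sqrt_sqD_remainder (R : realType) (a : R) : 0 < a ->
  (fun e : R => (Num.sqrt (a ^+ 2 + e ^+ 2) - a - e ^+ 2 / (2 * a)) / e ^+ 2)
    @ (0 : R)^' --> (0 : R).
Proof.
move=> a_gt0; apply/cvgr0Pnorm_lt => eps eps_gt0.
have r_gt0 : 0 < 4 * a ^+ 2 * eps by rewrite !mulr_gt0 // exprn_gt0.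
near=> e.
have e_neq0 : e != 0 by near: e; exact: nbhs_dnbhs_neq.
have e_small : `|e| < 4 * a ^+ 2 * eps by near: e; exact: dnbhs0_lt.
set S := Num.sqrt _.
have S_sq : S ^+ 2 = a ^+ 2 + e ^+ 2 by rewrite sqr_sqrtr // addr_ge0 // sqr_ge0.
have e2_gt0 : 0 < e ^+ 2 by rewrite exprn_even_gt0.
have S_ge0 : 0 <= S := sqrtr_ge0 _.
have aS : a < S by nra.
have Sae : S <= a + `|e|.
  have /andP [_] := sqrt_sqD_sub_bounds (ltW a_gt0) (normr_ge0 e).
  by rewrite real_normK ?num_real // -/S lerBlDl.
have -> : (S - a - e ^+ 2 / (2 * a)) / e ^+ 2 = (a - S) / (2 * a * (S + a)).
  have -> : e ^+ 2 = S ^+ 2 - a ^+ 2 by rewrite S_sq; ring.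
  by field; rewrite !gt_eqF //; nra.
have : 0 < eps * a * (S - a) by rewrite !mulr_gt0 // subr_gt0.
rewrite normrM normfV ltr0_norm ?subr_lt0 // gtr0_norm; last by nra.
by rewrite ltr_pdivrMr; nra.
Unshelve. all: by end_near.
Qed.

Lemma cvg_sq_div_remainder (R : realType) (a : R) : 0 < a ->
  (fun e : R => (e ^+ 2 / (2 * a + e) - e ^+ 2 / (2 * a)) / e ^+ 2)
    @ (0 : R)^' --> (0 : R).
Proof.
move=> a_gt0; apply/cvgr0Pnorm_lt => eps eps_gt0.
have r_gt0 : 0 < 2 * a ^+ 2 * eps by rewrite !mulr_gt0 // exprn_gt0.
near=> e.
have e_neq0 : e != 0 by near: e; exact: nbhs_dnbhs_neq.
have e_small : `|e| < 2 * a ^+ 2 * eps by near: e; exact: dnbhs0_lt.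
have /andP [ea1 ea2] : - a < e < a.
  by rewrite -ltr_norml; near: e; exact: dnbhs0_lt.
have -> : (e ^+ 2 / (2 * a + e) - e ^+ 2 / (2 * a)) / e ^+ 2 =
          - e / (2 * a * (2 * a + e)).
  by field; rewrite e_neq0 !gt_eqF //; nra.
rewrite normrM normfV normrN (gtr0_norm (x := 2 * a * _)); last by nra.
by rewrite ltr_pdivrMr; nra.
Unshelve. all: by end_near.
Qed.

Theorem theorem2p6 (R : realType) (d k : nat) (VA VB : 'M[R]_d) (w : 'rV[R]_d)
    (u v : 'I_k -> 'rV[R]_d) :
  \rank VA = k -> \rank VB = k -> normv w = 1 ->
  principal_vectors VA VB u v ->
  let KA := normv (orth_proj VA w) in
  let KB := normv (orth_proj VB w) in
  let KAB := normv (orth_proj (VA + VB)%MS w) in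
  let Delta := KAB - Num.max KA KB in
  let eta := private_info u v w in
  KB <= KA ->
  [/\ Delta = Num.sqrt (KA ^+ 2 + eta ^+ 2) - KA,
      eta ^+ 2 / (2 * KA + eta) <= Delta,
      Delta <= eta,
      (KA = 0 -> Delta = eta) &
      (0 < KA ->
         ((fun e : R => (Num.sqrt (KA ^+ 2 + e ^+ 2) - KA - e ^+ 2 / (2 * KA)) / e ^+ 2)
            @ (0 : R)^' --> (0 : R)) /\
         ((fun e : R => (e ^+ 2 / (2 * KA + e) - e ^+ 2 / (2 * KA)) / e ^+ 2)
            @ (0 : R)^' --> (0 : R)))].
Proof.
move=> rA rB _ pv KA KB KAB Delta eta KB_le_KA.
have DeltaE : Delta = Num.sqrt (KA ^+ 2 + eta ^+ 2) - KA.
  by rewrite /Delta max_l // /KAB (normv_orth_proj_addsmx pv rA rB).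
have /andP [lower upper] := sqrt_sqD_sub_bounds (sqrtr_ge0 _ : 0 <= KA) (sqrtr_ge0 _ : 0 <= eta).
split; rewrite ?DeltaE //.
- by move=> ->; rewrite expr0n add0r sqrtr_sqr subr0 ger0_norm ?sqrtr_ge0.
- by move=> KA_gt0; split; [exact: cvg_sqrt_sqD_remainder | exact: cvg_sq_div_remainder].
Qed.
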